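(* Let $\mathcal{C}$ be a small category in which no composite of non-identity morphisms is an identity, and let $M,N$ be $k\mathcal{C}$-modules such that $X=[M]-[N]$ satisfies $d^0X=0$, i.e. $\partial_0^*M\oplus\partial_1^*N\cong\partial_0^*N\oplus\partial_1^*M$ as $k\mathcal{G}^{\mathcal{C}}_1$-modules. Then for each line-component $\mathcal{M}$ of $\mathcal{C}$, the function $\operatorname{rk}X$ is constant on the morphisms in $\mathcal{M}$, and it is constant on the set of identity morphisms $1_x$ of the objects $x$ that are domains or codomains of morphisms in $\mathcal{M}$.
   Context: A $k\mathcal{C}$-module is a functor from $\mathcal{C}$ to finite-dimensional $k$-vector spaces ($k$ a field). For $X=[M]-[N]$ in the split Grothendieck group and a morphism $\varphi$ of $\mathcal{C}$, the rank invariant is $\operatorname{rk}X(\varphi)=\operatorname{rank}M(\varphi)-\operatorname{rank}N(\varphi)$ (so $\operatorname{rk}X(1_x)=\dim M(x)-\dim N(x)$). $\mathcal{G}^{\mathcal{C}}_1$ is the category whose objects are the non-identity morphisms $u:a\to b$ of $\mathcal{C}$ (written $[u]$); its morphisms $[u]\to[v]$ ($v:c\to d$) are identities and the pairs $(w\circ u,\;v\circ w)$ for each $w:b\to c$ in $\mathcal{C}$. The functors $\partial_0,\partial_1:\mathcal{G}^{\mathcal{C}}_1\to\mathcal{C}$ are $\partial_0[u]=b$, $\partial_0(f_0,f_1)=f_1$, $\partial_1[u]=a$, $\partial_1(f_0,f_1)=f_0$, and $d^0=\partial_0^*-\partial_1^*$ with $F^*M=M\circ F$. A set of non-identity morphisms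 of $\mathcal{C}$ is a line-component if the full subcategory of $\mathcal{G}^{\mathcal{C}}_1$ on it is a connected component of $\mathcal{G}^{\mathcal{C}}_1$. *)

From Stdlib Require Import Relations.
From HB Require Import structures.
From mathcomp Require Import all_boot all_order all_algebra.
Set Implicit Arguments. Unset Strict Implicit. Unset Printing Implicit Defensive.
Import GRing.Theory Num.Theory.
Local Open Scope ring_scope.

Record category := Category {
  Obj : Type;
  Hom : Obj -> Obj -> Type;
  idm : forall a, Hom a a;
  comp : forall a b c, Hom b c -> Hom a b -> Hom a c;
  comp_id_l : forall a b (f : Hom a b), comp (idm b) f = f;
  comp_id_r : forall a b (f : Hom a b), comp f (idm a) = f;
  comp_assoc : forall a b c d (f : Hom a b) (g : Hom b c) (h : Hom c d),
      comp h (comp g f) = comp (comp h g) f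
}.
Arguments Hom : clear implicits.
Arguments idm {C} a : rename.
Arguments comp {C a b c} g f : rename.

Definition Arr (C : category) := {a : Obj C & {b : Obj C & Hom C a b}}.
Definition arr (C : category) (a b : Obj C) (f : Hom C a b) : Arr C :=
  existT _ a (existT _ b f).
Definition src (C : category) (u : Arr C) : Obj C := projT1 u.
Definition tgt (C : category) (u : Arr C) : Obj C := projT1 (projT2 u).
Definition mor (C : category) (u : Arr C) : Hom C (src u) (tgt u) :=
  projT2 (projT2 u).

Definition is_id (C : category) (u : Arr C) : Prop :=
  exists x : Obj C, u = arr (idm x).

Definition no_id_composites (C : category) : Prop :=
  forall (a b c : Obj C) (f : Hom C a b) (g : Hom C b c),
    ~ is_id (arr f) -> ~ is_id (arr g) -> ~ is_id (arr (comp g f)).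

(** kC-modules: functors C -> finite-dimensional k-vector spaces.  M(x) is
    k^(dim x) (row vectors), and M(f) for f : a -> b is the matrix of the
    linear map k^(dim a) -> k^(dim b), v |-> v *m act f. *)
Record kCmodule (k : fieldType) (C : category) := KCModule {
  mdim : Obj C -> nat;
  act : forall a b, Hom C a b -> 'M[k]_(mdim a, mdim b);
  act_id : forall a, act (idm a) = 1%:M;
  act_comp : forall a b c (f : Hom C a b) (g : Hom C b c),
      act (comp g f) = act f *m act g
}.
Arguments mdim {k C} k0 x : rename.
Arguments act {k C} k0 {a b} f : rename.

Definition rkX (k : fieldType) (C : category) (M N : kCmodule k C)
  (a b : Obj C) (phi : Hom C a b) : int :=
  (\rank (act M phi))%:Z - (\rank (act N phi))%:Z.

(** The condition d^0 X = 0, i.e. an isomorphism of kG_1^C-modules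
    d0^*M (+) d1^*N  ~=  d0^*N (+) d1^*M, written out: for each object [u]
    (u : a -> b non-identity) of G_1^C, an invertible linear map
    P_u : M(b) (+) N(a) -> N(b) (+) M(a), natural with respect to every
    morphism (w o u, v o w) : [u] -> [v] of G_1^C (naturality for identity
    morphisms of G_1^C is automatic). *)
Definition d0_iso (k : fieldType) (C : category) (M N : kCmodule k C) : Prop :=
  exists (P : forall u : Arr C,
          'M[k]_(mdim M (tgt u) + mdim N (src u), mdim N (tgt u) + mdim M (src u)))
         (Q : forall u : Arr C,
          'M[k]_(mdim N (tgt u) + mdim M (src u), mdim M (tgt u) + mdim N (src u))),
    (forall u, ~ is_id u -> P u *m Q u = 1%:M /\ Q u *m P u = 1%:M) /\
    (forall u v, ~ is_id u -> ~ is_id v ->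
      forall w : Hom C (tgt u) (src v),
        block_mx (act M (comp (mor v) w)) 0 0 (act N (comp w (mor u))) *m P v
        = P u *m block_mx (act N (comp (mor v) w)) 0 0 (act M (comp w (mor u)))).

(** Adjacency in G_1^C: there is a morphism [u] -> [v], i.e. some
    w : tgt u -> src v. *)
Definition G1_adj (C : category) (u v : Arr C) : Prop :=
  ~ is_id u /\ ~ is_id v /\ inhabited (Hom C (tgt u) (src v)).

Definition G1_conn (C : category) : relation (Arr C) :=
  clos_refl_sym_trans (Arr C) (@G1_adj C).

Definition line_component (C : category) (L : Arr C -> Prop) : Prop :=
  (exists u, L u) /\
  (forall u, L u -> ~ is_id u) /\
  (forall u v, L u -> ~ is_id v -> (L v <-> G1_conn u v)).

Definition endpoint (C : category) (L : Arr C -> Prop) (x : Obj C) : Prop :=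
  exists u, L u /\ (src u = x \/ tgt u = x).

(** The isomorphism d^0X = 0 gives, for every non-identity u : a -> b, an
    invertible P_u : M(b) (+) N(a) -> N(b) (+) M(a).  Comparing dimensions
    shows rk X(1_a) = rk X(1_b); comparing ranks of the two sides of
    naturality along (w o u, v o w) : [u] -> [v] shows
    rk X(v o w) = rk X(w o u).  Taking w an identity, rk X agrees on
    composable non-identity morphisms, hence on adjacent objects of G_1^C
    (through w itself when w is not an identity), and therefore on each
    connected component. *)
From Stdlib Require Import Relations Classical.
From mathcomp Require Import all_boot all_order all_algebra.
From mathcomp Require Import zify.
Set Implicit Arguments. Unset Strict Implicit. Unset Printing Implicit Defensive.
Import GRing.Theory.
Local Open Scope ring_scope.

Lemma mxinv_dim (k : fieldType) m n (P : 'M[k]_(m, n)) (Q : 'M[k]_(n, m)) :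
  P *m Q = 1%:M -> Q *m P = 1%:M -> m = n.
Proof.
move=> PQ QP.
have /eqP rkP : row_free P by apply/row_freeP; exists Q.
have /eqP rkQ : row_free Q by apply/row_freeP; exists P.
by have := rank_leq_col P; have := rank_leq_col Q; rewrite rkP rkQ; lia.
Qed.

Lemma mxrankM_linv (k : fieldType) m n p (P : 'M[k]_(m, n)) (Q : 'M[k]_(n, m))
    (Y : 'M[k]_(n, p)) :
  Q *m P = 1%:M -> \rank (P *m Y) = \rank Y.
Proof.
move=> QP; apply/eqP; rewrite eqn_leq mxrankM_maxr /=.
by have := mxrankM_maxr Q (P *m Y); rewrite mulmxA QP mul1mx.
Qed.

Lemma rt_closure_invariant (T R : Type) (rel : relation T) (f : T -> R) :
  (forall u v, rel u v -> f u = f v) ->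
  forall u v, clos_refl_sym_trans T rel u v -> f u = f v.
Proof. by move=> hf u v; elim=> [x y /hf | // | x y _ -> | x y z _ -> _ ->]. Qed.

Lemma is_id_arr_dom_cod (C : category) (b c : Obj C) (w : Hom C b c) :
  is_id (arr w) -> b = c.
Proof. by move=> [x ex]; rewrite [b](f_equal (@src C) ex) [c](f_equal (@tgt C) ex). Qed.

Section RankInvariant.
Variables (k : fieldType) (C : category) (M N : kCmodule k C).
Variable P : forall u : Arr C,
  'M[k]_(mdim M (tgt u) + mdim N (src u), mdim N (tgt u) + mdim M (src u)).
Variable Q : forall u : Arr C,
  'M[k]_(mdim N (tgt u) + mdim M (src u), mdim M (tgt u) + mdim N (src u)).
Hypothesis PQ_inv : forall u, ~ is_id u -> P u *m Q u = 1%:M /\ Q u *m P u = 1%:M.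
Hypothesis P_natural : forall u v, ~ is_id u -> ~ is_id v ->
  forall w : Hom C (tgt u) (src v),
    block_mx (act M (comp (mor v) w)) 0 0 (act N (comp w (mor u))) *m P v
    = P u *m block_mx (act N (comp (mor v) w)) 0 0 (act M (comp w (mor u))).

Local Notation rk := (rkX M N).

Lemma rkX_idm_src_tgt u : ~ is_id u -> rk (idm (src u)) = rk (idm (tgt u)).
Proof.
move=> /PQ_inv [PQ QP]; have := mxinv_dim PQ QP.
by rewrite /rkX !act_id !mxrank1; lia.
Qed.

Lemma rkX_natural u v (w : Hom C (tgt u) (src v)) : ~ is_id u -> ~ is_id v ->
  rk (comp (mor v) w) = rk (comp w (mor u)).
Proof.
move=> hu hv; have := congr1 mxrank (P_natural hu hv w).
have free_Pv : row_free (P v) by apply/row_freeP; exists (Q v); case: (PQ_inv hv).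
have [_ QPu] := PQ_inv hu.
rewrite mxrankMfree // (mxrankM_linv _ QPu) !rank_diag_block_mx /rkX; lia.
Qed.

Lemma rkX_composable a b c (f : Hom C a b) (g : Hom C b c) :
  ~ is_id (arr f) -> ~ is_id (arr g) -> rk f = rk g.
Proof.
move=> hf hg; have := rkX_natural (u := arr f) (v := arr g) (idm b) hf hg.
by rewrite /= comp_id_l comp_id_r.
Qed.

Lemma rkX_G1_adj u v : G1_adj u v ->
  rk (mor u) = rk (mor v) /\ rk (idm (src u)) = rk (idm (src v)).
Proof.
case: u v => a [b f] [c [d g]]; rewrite /G1_adj /= => -[hf [hg [w]]].
have /= rk_ab := rkX_idm_src_tgt hf.
case: (classic (is_id (arr w))) => [/is_id_arr_dom_cod eq_bc | hw].
  by subst c; split; [exact: rkX_composable | rewrite rk_ab].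
have /= rk_bc := rkX_idm_src_tgt hw.
split; first by rewrite (rkX_composable hf hw) (rkX_composable hw hg).
by rewrite rk_ab rk_bc.
Qed.

Lemma rkX_G1_conn u v : G1_conn u v ->
  rk (mor u) = rk (mor v) /\ rk (idm (src u)) = rk (idm (src v)).
Proof.
have rk_pair_adj x y : G1_adj x y ->
    (rk (mor x), rk (idm (src x))) = (rk (mor y), rk (idm (src y))).
  by move=> /rkX_G1_adj [-> ->].
by move=> /(rt_closure_invariant rk_pair_adj) [-> ->].
Qed.

Lemma rkX_idm_endpoint u x : ~ is_id u -> src u = x \/ tgt u = x ->
  rk (idm x) = rk (idm (src u)).
Proof. by move=> hu [<- | <-]; rewrite ?(rkX_idm_src_tgt hu). Qed.

End RankInvariant.

Theorem proposition4p4 (k : fieldType) (C : category)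
  (hC : no_id_composites C) (M N : kCmodule k C) (hX : d0_iso M N)
  (L : Arr C -> Prop) (hL : line_component L) :
  (forall u v : Arr C, L u -> L v -> rkX M N (mor u) = rkX M N (mor v)) /\
  (forall x y : Obj C, endpoint L x -> endpoint L y ->
     rkX M N (idm x) = rkX M N (idm y)).
Proof.
have [P [Q [PQ_inv P_natural]]] := hX.
have [_ [L_non_id L_conn]] := hL.
have rk_L u v : L u -> L v -> rkX M N (mor u) = rkX M N (mor v) /\
    rkX M N (idm (src u)) = rkX M N (idm (src v)).
  move=> Lu Lv; apply: (rkX_G1_conn PQ_inv P_natural).
  by apply/(L_conn u v Lu (L_non_id v Lv)).
split=> [u v Lu Lv | x y [u [Lu hx]] [v [Lv hy]]]; first by case: (rk_L u v Lu Lv).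
rewrite (rkX_idm_endpoint PQ_inv (L_non_id u Lu) hx).
rewrite (rkX_idm_endpoint PQ_inv (L_non_id v Lv) hy).
by case: (rk_L u v Lu Lv).
Qed.
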